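(* Let $p$ be prime, $r,k\ge1$, and $\mu\in\mathrm{GL}_r(\mathbb{Z}_p)$ with $\mu^p=I$. For $b\in\{0,\dots,p-1\}$ let $M_b:=\sum_{i=0}^{b-1}\mu^i$. For $x\in(\mathbb{Z}_p^r)^k$ and $w\in\mathbb{Z}_p^r$ let $\eta^x_w:=|\{b\in\{0,\dots,p-1\}^k:\sum_{j=1}^k M_{b_j}x_j=w\}|$. For $(x,w)$ uniformly random, $\mathbb{E}[\eta^x_w]=p^{k-r}$ and $\mathrm{Var}(\eta^x_w)=p^{k-r}(1-p^{-r})$. *)

From mathcomp Require Import all_boot all_order all_algebra.
Set Implicit Arguments. Unset Strict Implicit. Unset Printing Implicit Defensive.
Import Order.TTheory GRing.Theory Num.Theory.
Local Open Scope ring_scope.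

Definition Mb (p r : nat) (mu : 'M['F_p]_r) (b : nat) : 'M['F_p]_r :=
  \sum_(i < b) mu ^+ i.

Definition eta (p r k : nat) (mu : 'M['F_p]_r)
    (x : {ffun 'I_k -> 'cV['F_p]_r}) (w : 'cV['F_p]_r) : nat :=
  #|[set b : {ffun 'I_k -> 'I_p} | \sum_(j < k) (Mb mu (b j) *m x j) == w]|.

Definition unif_mean (T : finType) (f : T -> rat) : rat :=
  (\sum_(t : T) f t) / #|T|%:R.
Definition unif_var (T : finType) (f : T -> rat) : rat :=
  unif_mean (fun t => (f t - unif_mean f) ^+ 2).

From mathcomp Require Import all_boot all_order all_algebra.
From mathcomp Require Import ring.
Set Implicit Arguments. Unset Strict Implicit. Unset Printing Implicit Defensive.
Import Order.TTheory GRing.Theory Num.Theory.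
Local Open Scope ring_scope.

(* The first moment counts pairs (x, b) with sum_j M_{b_j} x_j = w; the second
   counts triples (x, b, b') with sum_j M_{b_j} x_j = sum_j M_{b'_j} x_j.  For
   b' <> b this is a linear equation in x whose coefficient M_{b'_j} - M_{b_j}
   at a coordinate j where b and b' differ is invertible: up to sign it is
   mu^a M_c with 0 < c < p, and a row vector killed by M_c is fixed by mu^c,
   hence (c being prime to p and mu^p = I) by mu, hence is killed by c.  So a
   fraction exactly p^-r of all x solve it, which gives the variance. *)

Lemma sum_indicator_mul (R : pzSemiRingType) (T : finType) (a : T) (F : T -> R) :
  \sum_i (a == i)%:R * F i = F a.
Proof.
rewrite (bigD1 a) //= eqxx mul1r big1 ?addr0 // => i ia.
by rewrite eq_sym (negbTE ia) mul0r.
Qed.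

Lemma sum_indicator (R : pzSemiRingType) (T : finType) (a : T) :
  \sum_i (a == i)%:R = 1 :> R.
Proof.
rewrite -[RHS](sum_indicator_mul a (fun _ => 1 : R)).
by apply: eq_bigr => i _; rewrite mulr1.
Qed.

Lemma natr_card_neq0 (T : finType) (t : T) : #|T|%:R != 0 :> rat.
Proof. by rewrite pnatr_eq0 -lt0n; apply/card_gt0P; exists t. Qed.

Lemma unif_varE (T : finType) (f : T -> rat) :
  unif_var f = unif_mean (fun t => f t ^+ 2) - unif_mean f ^+ 2.
Proof.
rewrite /unif_var /unif_mean; set m := (\sum_t f t) / #|T|%:R.
have [T0|T_gt0] := posnP #|T|.
  by rewrite /m T0 !invr0 !mulr0 expr0n subr0.
have T_neq0 : #|T|%:R != 0 :> rat by rewrite pnatr_eq0 -lt0n.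
have sum_f : \sum_t f t = m * #|T|%:R by rewrite /m mulfVK.
rewrite (eq_bigr (fun t => f t ^+ 2 - 2 * m * f t + m ^+ 2)) => [|t _]; last by ring.
rewrite !big_split /= sumrN -mulr_sumr sum_f sumr_const -mulr_natr.
by field.
Qed.

Lemma unif_mean_pair (T U : finType) (f : T * U -> rat) :
  unif_mean f = (\sum_t \sum_u f (t, u)) / (#|T| * #|U|)%:R.
Proof. by rewrite /unif_mean card_prod pair_big; congr (_ / _); apply: eq_bigr => -[]. Qed.

Lemma rowfix_expr_gcdn (R : pzRingType) n (g : 'M[R]_n) (v : 'rV[R]_n) a b :
  (0 < a)%N -> v *m g ^+ a = v -> v *m g ^+ b = v -> v *m g ^+ gcdn a b = v.
Proof.
move=> a_gt0 fix_a fix_b.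
have fix_mul c m : v *m g ^+ c = v -> v *m g ^+ (c * m) = v.
  move=> fix_c; elim: m => [|m IHm]; first by rewrite muln0 expr0 mulmx1.
  by rewrite mulnS exprD -mulmxE mulmxA fix_c.
case: (egcdnP b a_gt0) => u u' def_gcd _.
rewrite -{1}(fix_mul _ u' fix_b) -mulmxA mulmxE -exprD mulnC -def_gcd mulnC.
exact: fix_mul.
Qed.

Lemma unitmx_expr_periodic (R : comUnitRingType) n (g : 'M[R]_n) p b :
  (0 < p)%N -> g ^+ p = 1 -> g ^+ b \in unitmx.
Proof.
move=> p_gt0 gp1; apply: (proj1 (@mulmx1_unit _ _ _ (g ^+ (b * p.-1)) _)).
by rewrite mulmxE -exprD -{1}(muln1 b) -mulnDr add1n prednK // mulnC exprM gp1 expr1n.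
Qed.

Lemma unitmxN (R : comUnitRingType) n (A : 'M[R]_n) :
  (- A \in unitmx) = (A \in unitmx).
Proof.
rewrite -scaleN1r -mul_mx_scalar unitmx_mul [_%:M \in _]unitmxE det_scalar.
by rewrite unitrX ?unitrN1 ?andbT.
Qed.

Section MbInvertible.
Variables (p r : nat) (mu : 'M['F_p]_r).
Hypotheses (p_pr : prime p) (mu_p : mu ^+ p = 1).

Lemma MbD a d : Mb mu (a + d) = Mb mu a + mu ^+ a * Mb mu d.
Proof.
elim: d => [|d IHd]; first by rewrite addn0 /Mb big_ord0 mulr0 addr0.
by rewrite addnS /Mb !big_ord_recr /= -/(Mb mu _) IHd mulrDr exprD addrA.
Qed.

Lemma Mb_mulBr c : Mb mu c * (mu - 1) = mu ^+ c - 1.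
Proof.
rewrite subrX1 -/(Mb mu c); apply/esym/commr_sum => i _.
by apply/commr_sym/commrB; [apply/commr_sym/commrX/commr_refl | apply: commr1].
Qed.

Lemma Mb_unitmx c : (0 < c < p)%N -> Mb mu c \in unitmx.
Proof.
case/andP=> c_gt0 c_lt_p.
have p_ndvd_c : ~~ (p %| c)%N.
  by apply/negP => /(dvdn_leq c_gt0); rewrite leqNgt c_lt_p.
rewrite unitmxE unitfE; apply/negP => /det0P [v v_neq0 vMb0].
have fix_c : v *m mu ^+ c = v.
  apply/eqP; rewrite -subr_eq0 -{2}(mulmx1 v) -mulmxBr -Mb_mulBr.
  by rewrite -mulmxE mulmxA vMb0 mul0mx.
have fix_p : v *m mu ^+ p = v by rewrite mu_p mulmx1.
have fix_mu : v *m mu = v.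
  have c_coprime_p : coprime c p by rewrite coprime_sym prime_coprime.
  by have := rowfix_expr_gcdn c_gt0 fix_c fix_p; rewrite (eqP c_coprime_p).
have fix_expr i : v *m mu ^+ i = v.
  elim: i => [|i IHi]; first by rewrite expr0 mulmx1.
  by rewrite exprS -mulmxE mulmxA fix_mu.
have : v *m Mb mu c = c%:R *: v.
  rewrite /Mb mulmx_sumr (eq_bigr (fun _ => v)) => [|i _]; last exact: fix_expr.
  by rewrite sumr_const card_ord scaler_nat.
rewrite vMb0 => /esym/eqP; rewrite scaler_eq0 (negbTE v_neq0) orbF.
by rewrite -(dvdn_pcharf (pchar_Fp p_pr)) (negbTE p_ndvd_c).
Qed.

Lemma Mb_sub_unitmx a b : (a < p)%N -> (b < p)%N -> a != b ->
  Mb mu a - Mb mu b \in unitmx.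
Proof.
wlog b_lt_a : a b / (b < a)%N => [hwlog a_lt_p b_lt_p|a_lt_p _ _].
  case: ltngtP => [a_lt_b|b_lt_a|_] // _; last by rewrite hwlog // gtn_eqF.
  by rewrite -opprB unitmxN hwlog // gtn_eqF.
rewrite -(subnKC (ltnW b_lt_a)) MbD addrC addKr -mulmxE unitmx_mul.
rewrite (unitmx_expr_periodic _ (prime_gt0 p_pr) mu_p) Mb_unitmx //.
by rewrite subn_gt0 b_lt_a (leq_ltn_trans (leq_subr _ _) a_lt_p).
Qed.

End MbInvertible.

Section LinearFibres.
Variables (F : finComUnitRingType) (n k : nat) (D : 'I_k -> 'M[F]_n) (j0 : 'I_k).
Hypothesis D_j0_unit : D j0 \in unitmx.
Local Notation X := {ffun 'I_k -> 'cV[F]_n}.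

Lemma sum_linear_eq_shift (v : 'cV[F]_n) :
  \sum_(x : X) ((\sum_j D j *m x j == v)%:R : rat)
  = \sum_(x : X) ((\sum_j D j *m x j == 0)%:R : rat).
Proof.
pose e : X := [ffun j => if j == j0 then invmx (D j0) *m v else 0].
have De : \sum_j D j *m e j = v.
  rewrite (bigD1 j0) //= big1 => [|j /negbTE j_neq_j0]; last first.
    by rewrite ffunE j_neq_j0 mulmx0.
  by rewrite ffunE eqxx mulmxA mulmxV // mul1mx addr0.
rewrite (reindex_inj (addrI e)); apply: eq_bigr => x _.
under eq_bigr do rewrite ffunE mulmxDr.
by rewrite big_split /= De -{2}(addr0 v) (inj_eq (addrI v)).
Qed.

Lemma sum_linear_eq (v : 'cV[F]_n) :
  \sum_(x : X) ((\sum_j D j *m x j == v)%:R : rat) = #|X|%:R / #|{: 'cV[F]_n}|%:R.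
Proof.
have sum_fibres : \sum_(w : 'cV[F]_n) \sum_(x : X) ((\sum_j D j *m x j == w)%:R : rat)
    = #|X|%:R.
  rewrite exchange_big /= (eq_bigr (fun _ => 1)) ?sumr_const // => x _.
  exact: sum_indicator.
rewrite sum_linear_eq_shift -sum_fibres.
rewrite (eq_bigr _ (fun w _ => sum_linear_eq_shift w)) sumr_const.
by rewrite -[_ *+ _]mulr_natr mulfK ?(natr_card_neq0 0).
Qed.

End LinearFibres.

Section EtaMoments.
Variables (p r k : nat) (mu : 'M['F_p]_r).
Hypotheses (p_pr : prime p) (mu_p : mu ^+ p = 1).
Local Notation V := 'cV['F_p]_r.
Local Notation X := {ffun 'I_k -> V}.
Local Notation B := {ffun 'I_k -> 'I_p}.

Let card_X_neq0 : #|X|%:R != 0 :> rat := natr_card_neq0 [ffun=> 0].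
Let card_V_neq0 : #|{: V}|%:R != 0 :> rat := natr_card_neq0 0.

Definition Mb_comb (b : B) (x : X) : V := \sum_(j < k) Mb mu (b j) *m x j.

Lemma eta_sum_indicator (x : X) (w : V) :
  (eta mu x w)%:R = \sum_(b : B) ((Mb_comb b x == w)%:R : rat).
Proof.
rewrite /eta -sum1dep_card natr_sum big_mkcond /=.
by apply: eq_bigr => b _; case: eqP.
Qed.

Lemma sum_eta (x : X) : \sum_(w : V) ((eta mu x w)%:R : rat) = #|B|%:R.
Proof.
under eq_bigr do rewrite eta_sum_indicator.
rewrite exchange_big /= (eq_bigr (fun _ => 1)) ?sumr_const // => b _.
exact: sum_indicator.
Qed.

Lemma sum_Mb_comb_collision (b b' : B) :
  \sum_(x : X) ((Mb_comb b' x == Mb_comb b x)%:R : rat)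
  = if b' == b then #|X|%:R else #|X|%:R / #|{: V}|%:R.
Proof.
have [->|b'_neq_b] := eqVneq b' b.
  by rewrite (eq_bigr (fun _ => 1)) ?sumr_const // => x _; rewrite eqxx.
have [j0 bj0_neq] : exists j0, b' j0 != b j0.
  apply/existsP; rewrite -negb_forall; apply: contra b'_neq_b => /forallP b'_eq_b.
  by apply/eqP/ffunP => j; apply/eqP/b'_eq_b.
have D_j0_unit : Mb mu (b' j0) - Mb mu (b j0) \in unitmx.
  exact: Mb_sub_unitmx.
rewrite -(@sum_linear_eq _ _ _ (fun j => Mb mu (b' j) - Mb mu (b j)) j0 D_j0_unit 0).
apply: eq_bigr => x _; rewrite -subr_eq0 /Mb_comb -sumrB.
by congr ((_ == 0)%:R); apply: eq_bigr => j _; rewrite mulmxBl.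
Qed.

Lemma sum_eta_sq :
  \sum_(x : X) \sum_(w : V) ((eta mu x w)%:R : rat) ^+ 2
  = #|B|%:R * (#|X|%:R + (#|B|%:R - 1) * (#|X|%:R / #|{: V}|%:R)).
Proof.
have sum_eta_sq_x (x : X) : \sum_(w : V) ((eta mu x w)%:R : rat) ^+ 2
    = \sum_(b : B) \sum_(b' : B) (Mb_comb b' x == Mb_comb b x)%:R.
  under eq_bigr do rewrite eta_sum_indicator expr2 big_distrlr.
  rewrite exchange_big; apply: eq_bigr => b _ /=.
  rewrite exchange_big; apply: eq_bigr => b' _ /=.
  exact: sum_indicator_mul.
under eq_bigr do rewrite sum_eta_sq_x.
rewrite exchange_big /= mulr_natl -sumr_const; apply: eq_bigr => b _.
rewrite exchange_big /=; under eq_bigr do rewrite sum_Mb_comb_collision.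
rewrite (bigD1 b) //= eqxx (eq_bigr (fun _ => #|X|%:R / #|{: V}|%:R)) => [|b'].
  have B_gt0 : (0 < #|B|)%N by apply/card_gt0P; exists b.
  by rewrite sumr_const cardC1 -[_ / _ *+ _]mulr_natl -subn1 natrB.
by move/negbTE->.
Qed.

Lemma mean_eta :
  unif_mean (fun xw : X * V => (eta mu xw.1 xw.2)%:R) = #|B|%:R / #|{: V}|%:R.
Proof.
rewrite unif_mean_pair (eq_bigr _ (fun x _ => sum_eta x)) sumr_const natrM.
by rewrite -[_ *+ _]mulr_natl; field; rewrite card_X_neq0 card_V_neq0.
Qed.

Lemma mean_eta_sq :
  unif_mean (fun xw : X * V => ((eta mu xw.1 xw.2)%:R : rat) ^+ 2)
  = #|B|%:R / #|{: V}|%:R * (1 + (#|B|%:R - 1) / #|{: V}|%:R).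
Proof.
rewrite unif_mean_pair sum_eta_sq natrM.
by field; rewrite card_X_neq0 card_V_neq0.
Qed.

End EtaMoments.

Theorem mainTheorem11 (p r k : nat) (mu : 'M['F_p]_r) :
  prime p -> (0 < r)%N -> (0 < k)%N ->
  mu \in unitmx -> mu ^+ p = 1 ->
  unif_mean (fun xw : {ffun 'I_k -> 'cV['F_p]_r} * 'cV['F_p]_r =>
               (eta mu xw.1 xw.2)%:R)
    = (p%:Q) ^ (k%:Z - r%:Z)
  /\
  unif_var (fun xw : {ffun 'I_k -> 'cV['F_p]_r} * 'cV['F_p]_r =>
               (eta mu xw.1 xw.2)%:R)
    = (p%:Q) ^ (k%:Z - r%:Z) * (1 - (p%:Q) ^ (- r%:Z)).
Proof.
move=> p_pr _ _ _ mu_p.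
have card_V : #|{: 'cV['F_p]_r}| = (p ^ r)%N by rewrite card_mx card_Fp // muln1.
have card_B : #|{: {ffun 'I_k -> 'I_p}}| = (p ^ k)%N by rewrite card_ffun !card_ord.
have p_neq0 : p%:R != 0 :> rat by rewrite pnatr_eq0 -lt0n prime_gt0.
have p_pow_k_sub_r : p%:Q ^ (k%:Z - r%:Z) = p%:R ^+ k / p%:R ^+ r.
  by rewrite expfzDr // -exprnN.
rewrite unif_varE !mean_eta // mean_eta_sq // card_V card_B !natrX p_pow_k_sub_r.
split=> //; rewrite -exprnN; field; exact: expf_neq0.
Qed.
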